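(* Let $\mathcal{G}\subseteq C(\mathbb{R},\mathbb{R})$. The following conditions are equivalent: (1) $\mathcal{K}_\mathcal{G}=\{\mathrm{CL}(E):E\in\mathrm{CL}(\mathbb{R})\}$; (2) there exist $f,h\in C(\mathbb{R},\mathbb{R}^* )$ such that $f\le h$, $f^{-1}[\mathbb{R}]\cup h^{-1}[\mathbb{R}]=\mathbb{R}$, and $\mathcal{G}=[f,h]$.
   Context: $\mathbb{R}^*=\mathbb{R}\cup\{-\infty,\infty\}$ with its usual order topology; $C(\mathbb{R},\mathbb{R}^* )$ is the set of continuous functions $\mathbb{R}\to\mathbb{R}^*$; $f\le g$ means $f(x)\le g(x)$ for all $x$; $[f,h]=\{g\in C(\mathbb{R},\mathbb{R}):f\le g\le h\}$. For a closed set $E\subseteq\mathbb{R}$, $\mathrm{CL}(E)$ denotes the family of all closed subsets of $E$. For $\mathcal{G}\subseteq C(\mathbb{R},\mathbb{R})$ let $R_\mathcal{G}=\{(f,E)\in C(\mathbb{R},\mathbb{R})\times\mathrm{CL}(\mathbb{R}):(\exists g\in\mathcal{G})\, f\restriction E=g\restriction E\}$; for $\mathcal{F}\subseteq C(\mathbb{R},\mathbb{R})$ put $E_\mathcal{G}(\mathcal{F})=\{E\in\mathrm{CL}(\mathbb{R}):(\forall f\in\mathcal{F})\,(f,E)\in R_\mathcal{G}\}$, and let $\mathcal{K}_\mathcal{G}=\{E_\mathcal{G}(\mathcal{F}):\mathcal{F}\subseteq C(\mathbb{R},\mathbb{R})\}$. *)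

From HB Require Import structures.
From mathcomp Require Import all_boot all_order all_algebra.
From mathcomp Require Import all_classical all_reals all_analysis.
Set Implicit Arguments. Unset Strict Implicit. Unset Printing Implicit Defensive.
Import Order.TTheory GRing.Theory Num.Theory.
Import numFieldNormedType.Exports.
Local Open Scope classical_set_scope.
Local Open Scope ring_scope.

(* The real line is modelled by an arbitrary realType R; the extended line
   R^* is \bar R with its (order) topology from mathcomp-analysis. *)

Definition CL {R : realType} (E : set R) : set (set R) :=
  [set A | closed A /\ A `<=` E].

Definition RG {R : realType} (G : set (R -> R)) (f : R -> R) (E : set R) : Prop :=
  continuous f /\ closed E /\ exists2 g, G g & forall x, E x -> f x = g x.

Definition EG {R : realType} (G : set (R -> R)) (F : set (R -> R)) : set (set R) :=
  [set E | closed E /\ forall f, F f -> RG G f E].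

Definition KG {R : realType} (G : set (R -> R)) : set (set (set R)) :=
  [set K | exists2 F : set (R -> R), (forall f, F f -> continuous f) & K = EG G F].

Definition fint {R : realType} (f h : R -> \bar R) : set (R -> R) :=
  [set g | continuous g /\ (forall x, (f x <= (g x)%:E)%E) /\ (forall x, ((g x)%:E <= h x)%E)].

From HB Require Import structures.
From mathcomp Require Import all_boot all_order all_algebra.
From mathcomp Require Import all_classical all_reals all_analysis.
From mathcomp Require Import lra.
Import Order.TTheory GRing.Theory Num.Theory.
Import numFieldNormedType.Exports.
Local Open Scope classical_set_scope.
Local Open Scope ring_scope.

(* If G = [f, h], a continuous p agrees on a closed set A with a member of G
   iff f <= p <= h on A: clamp p between f and h, which stays real because
   f x or h x is finite.  Hence E_G(F) is CL of the intersection of these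
   bands over p in F, and bump functions leaving the band at a single point
   show that every closed set is such an intersection.

   Conversely, applying (1) to F = {p} shows that the set of points where p
   meets a member of G is closed and that p agrees there with one g in G.
   Gluing two members of G and applying the intermediate value theorem to the
   agreeing member shows that G attains every value strictly between its
   lower and upper envelopes f = inf G and h = sup G; these are then
   continuous, closedness extends attainment to the closed band, so
   G = [f, h].  Applying (1) to CL(empty) gives at every x an omitted value,
   so f x or h x is finite. *)

Section order_continuity.
Context {d} {X : topologicalType} {T : orderTopologicalType d}.
Local Open Scope order_scope.

Lemma continuous_gt_near (F : X -> T) x a :
  {for x, continuous F} -> a < F x -> \forall y \near x, a < F y.
Proof.
move=> cF aF; have : \forall y \near x, F y \in `]a, +oo[.
  apply: (cF [set t | t \in `]a, +oo[]); apply: open_nbhs_nbhs.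
  by split; [exact: rray_open | rewrite /= in_itv /= aF].
by apply: filterS => y; rewrite in_itv /= andbT.
Qed.

Lemma continuous_lt_near (F : X -> T) x b :
  {for x, continuous F} -> F x < b -> \forall y \near x, F y < b.
Proof.
move=> cF Fb; have : \forall y \near x, F y \in `]-oo, b[.
  apply: (cF [set t | t \in `]-oo, b[]); apply: open_nbhs_nbhs.
  by split; [exact: lray_open | rewrite /= in_itv /= Fb].
by apply: filterS => y; rewrite in_itv.
Qed.

Lemma order_continuous_at (F : X -> T) x :
  (forall a, a < F x -> \forall y \near x, a < F y) ->
  (forall b, F x < b -> \forall y \near x, F y < b) ->
  {for x, continuous F}.
Proof.
move=> Fgt Flt U; rewrite itv_nbhsE => -[i [oi xi] iU].
suff : \forall y \near x, U (F y) by [].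
move: oi xi iU; case: i => [[[]l|[]] [[]u|[]]] // _ xi iU; rewrite in_itv /= ?andbT in xi.
- move/andP: xi => [lx xu]; near=> y; apply: iU; rewrite /= in_itv /=.
  by apply/andP; split; near: y; [exact: Fgt|exact: Flt].
- near=> y; apply: iU; rewrite /= in_itv /= andbT.
  by near: y; exact: Fgt.
- near=> y; apply: iU; rewrite /= in_itv /=.
  by near: y; exact: Flt.
- by apply: nearW => y; apply: iU; rewrite /= in_itv.
Unshelve. all: by end_near.
Qed.

Lemma closed_fun_le (A B : X -> T) :
  continuous A -> continuous B -> closed [set x | A x <= B x].
Proof.
move=> cA cB; rewrite -[X in closed X]setCK; apply: open_closedC.
rewrite openE => x /= /negP; rewrite -ltNge => BA.
suff : \forall y \near x, B y < A y.
  by apply: filterS => y; rewrite ltNge => /negP.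
have [[c /andP[Bc cA']]|noc] := pselect (exists c, B x < c < A x).
  near=> y; apply: (@lt_trans _ _ c).
    by near: y; exact: continuous_lt_near (cB x) Bc.
  by near: y; exact: continuous_gt_near (cA x) cA'.
near=> y; rewrite ltNge; apply/negP => AB; apply: noc; exists (A y).
have By : B y < A x by near: y; exact: continuous_lt_near (cB x) BA.
have Ay : B x < A y by near: y; exact: continuous_gt_near (cA x) BA.
by rewrite Ay (le_lt_trans AB By).
Unshelve. all: by end_near.
Qed.

End order_continuity.

Lemma EFin_between {R : realType} {a b : \bar R} :
  (a < b)%E -> exists c : R, (a < c%:E < b)%E.
Proof.
case: a => [a| |]; case: b => [b| |] //=; rewrite ?lte_fin => ab.
- by exists ((a + b) / 2); rewrite !lte_fin; apply/andP; split; lra.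
- by exists (a + 1); rewrite !lte_fin ltry andbT; lra.
- by exists (b - 1); rewrite !lte_fin ltNyr; lra.
- by exists 0; rewrite ltNyr ltry.
Qed.

Lemma continuous_EFin {T : topologicalType} {R : realType} {g : T -> R} :
  continuous g -> continuous (EFin \o g).
Proof. by move=> cg x; apply: cvg_EFin; [exact: nearW | exact: cg]. Qed.

Lemma continuous_dist {R : realType} (y : R) : continuous (fun z : R => `|z - y|).
Proof.
move=> z; apply: (@continuous_comp _ _ _ (fun w : R => w - y) Num.Def.normr).
  exact: continuousB cvg_id (@cst_continuous _ _ y z).
exact: norm_continuous.
Qed.

Lemma closed_set1R {R : realType} (y : R) : closed [set y].
Proof. exact: (accessible_closed_set1 (hausdorff_accessible (@Rhausdorff R))). Qed.

Lemma closed_dnbhs {R : realType} (S : set R) y :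
  closed S -> (\forall z \near y^', S z) -> S y.
Proof. by move=> cS Sy; apply: (@closed_cvg _ _ y^' _ id S cS Sy y); exact: nbhs_dnbhs. Qed.

Lemma continuous_bump {R : realType} {g : R -> R} {e : R} (x v : R) :
  continuous g -> 0 < e -> exists p : R -> R,
    [/\ continuous p, p x = v & forall z, ~ ball x e z -> p z = g z].
Proof.
move=> cg e0.
pose tent : R -> R := (fun=> 0) \max (fun z => e - `|z - x|).
have ctent : continuous tent.
  apply: max_fun_continuous; first exact: cst_continuous.
  by move=> z; exact: continuousB (@cst_continuous _ _ e z) (continuous_dist x z).
exists (fun z => g z + (v - g x) / e * tent z); split.
- move=> z; apply: continuousD (cg z) _.
  exact: continuousM (@cst_continuous _ _ _ z) (ctent z).
- by rewrite /tent /= subrr normr0 subr0 max_r ?ltW // divfK ?gt_eqF // addrC subrK.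
- move=> z /negP; rewrite -leNgt distrC => ez.
  by rewrite /tent /= max_l ?mulr0 ?addr0 // subr_le0.
Qed.

Section interval_family.
Context {R : realType} (f h : R -> \bar R).
Hypotheses (cf : continuous f) (ch : continuous h) (fh : forall x, (f x <= h x)%E)
  (fin : forall x, f x \is a fin_num \/ h x \is a fin_num).

Definition band (p : R -> R) : set R :=
  [set y | (f y <= (p y)%:E)%E /\ ((p y)%:E <= h y)%E].

Lemma closed_band p : continuous p -> closed (band p).
Proof. by move=> cp; apply: closedI; apply: closed_fun_le => //; exact: continuous_EFin. Qed.

Definition eclamp (p : R -> R) : R -> \bar R := f \max (h \min (EFin \o p)).

Definition clamp (p : R -> R) : R -> R := fine \o eclamp p.

Lemma eclamp_fin_num p x : eclamp p x \is a fin_num.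
Proof.
have [fx hx] : (f x < +oo)%E /\ (-oo < h x)%E.
  case: (fin x) => /fin_numPlt /andP[lo up].
    by split => //; exact: lt_le_trans lo (fh x).
  by split => //; exact: le_lt_trans (fh x) up.
apply/fin_numPlt; rewrite /eclamp /= lt_max gt_max lt_min gt_min hx ltNyr ltry.
by rewrite fx !orbT.
Qed.

Lemma clampE p x : (clamp p x)%:E = eclamp p x.
Proof. by rewrite fineK // eclamp_fin_num. Qed.

Lemma clamp_fint p : continuous p -> fint f h (clamp p).
Proof.
move=> cp; split; [|split] => x.
- have ce : continuous (eclamp p).
    exact: max_fun_continuous cf (min_fun_continuous ch (continuous_EFin cp)).
  have : eclamp p z @[z --> x] --> (clamp p x)%:E by rewrite clampE; exact: ce.
  by move/fine_cvgP => [].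
- by rewrite clampE /eclamp /= le_max lexx.
- by rewrite clampE /eclamp /= ge_max fh ge_min lexx.
Qed.

Lemma clamp_band p y : band p y -> clamp p y = p y.
Proof. by move=> [fp ph]; apply/EFin_inj; rewrite clampE /eclamp /= min_r // max_r. Qed.

Lemma EG_fint F : (forall p, F p -> continuous p) ->
  EG (fint f h) F = CL (\bigcap_(p in F) band p).
Proof.
move=> cF; apply/seteqP; split => A [cA AF]; split => //.
- move=> y Ay p Fp; have [_ [_ [g [_ [gf gh]] pg]]] := AF p Fp.
  by rewrite /band /= pg.
- move=> p Fp; split; first exact: cF.
  split => //; exists (clamp p); first exact/clamp_fint/cF.
  by move=> y /AF /(_ p Fp) /clamp_band.
Qed.

Lemma bigcap_band_closed E : closed E ->
  \bigcap_(p in [set p | continuous p /\ E `<=` band p]) band p = E.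
Proof.
move=> cE; apply/seteqP; split => [y bandy|y Ey p [_ /(_ y Ey)]//].
apply: contrapT => nEy.
have : nbhs y (~` E) by apply: open_nbhs_nbhs; split => //; exact: closed_openC.
move=> /nbhs_ballP [e e0 ballE].
have [v nbandv] : exists v : R, ~ ((f y <= v%:E)%E /\ (v%:E <= h y)%E).
  case: (fin y) => /fineK <-.
    by exists (fine (f y) - 1)%R; rewrite lee_fin => -[+ _]; lra.
  by exists (fine (h y) + 1)%R; rewrite lee_fin => -[_ +]; lra.
have [g0c [g0l g0h]] := clamp_fint _ (@cst_continuous _ _ 0).
have [p [cp pv pg0]] := continuous_bump y v g0c e0.
apply: nbandv; rewrite -pv; apply: bandy; split => // z Ez.
by rewrite /band /= pg0 => [|/ballE]; [split; [exact: g0l | exact: g0h] | ].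
Qed.

Lemma KG_fint : KG (fint f h) = [set CL E | E in [set E : set R | closed E]].
Proof.
apply/seteqP; split => K.
- move=> [F cF ->]; exists (\bigcap_(p in F) band p); last by rewrite EG_fint.
  by apply: closed_bigI => p Fp; exact: closed_band (cF p Fp).
- move=> [E cE <-]; exists [set p | continuous p /\ E `<=` band p]; first by move=> p [].
  by rewrite EG_fint ?bigcap_band_closed // => p [].
Qed.

End interval_family.

Lemma continuous_glue {R : realType} {g1 g2 : R -> R} {d : R} (x : R) :
  continuous g1 -> continuous g2 -> 0 < d -> exists p : R -> R,
    [/\ continuous p, forall z, z <= x -> p z = g1 z & p (x + d) = g2 (x + d)].
Proof.
move=> cg1 cg2 d0.
pose ramp : R -> R := (fun=> 1) \min ((fun=> 0) \max (fun z => (z - x) / d)).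
have cramp : continuous ramp.
  apply: min_fun_continuous; first exact: cst_continuous.
  apply: max_fun_continuous; first exact: cst_continuous.
  move=> z; apply: continuousM (@cst_continuous _ _ _ z).
  exact: continuousB cvg_id (@cst_continuous _ _ x z).
exists (fun z => g1 z + (g2 z - g1 z) * ramp z); split.
- move=> z; apply: continuousD (cg1 z) _.
  exact: continuousM (continuousB (cg2 z) (cg1 z)) (cramp z).
- move=> z zx; rewrite /ramp /= (@max_l _ _ 0) ?min_r ?mulr0 ?addr0 //.
  by rewrite pmulr_lle0 ?invr_gt0 // subr_le0.
- rewrite /ramp /= addrAC subrr add0r divff ?gt_eqF // max_r ?ler01 // min_l //.
  by rewrite mulr1 addrC subrK.
Qed.

Section coincidence.
Context {R : realType}.
Implicit Types (G : set (R -> R)) (p : R -> R) (x t : R).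

Definition hits G x t := exists2 g, G g & g x = t.

Definition coinc G p : set R := [set y | hits G y (p y)].

Definition coinc_property G := forall p, continuous p ->
  closed (coinc G p) /\ exists2 g, G g & forall y, coinc G p y -> p y = g y.

Lemma coinc_property_inhabited {G} : coinc_property G -> exists g, G g.
Proof. by move=> KPG; have [_ [g Gg _]] := KPG _ (@cst_continuous _ _ 0); exists g. Qed.

Lemma KG_coinc_property {G} :
  KG G = [set CL E | E in [set E : set R | closed E]] -> coinc_property G.
Proof.
move=> KGE p cp.
have [E cE EGp] : [set CL E | E in [set E : set R | closed E]] (EG G [set p]).
  by rewrite -KGE; exists [set p] => // q ->.
have [g Gg pg] : exists2 g, G g & forall y, E y -> p y = g y.
  have : EG G [set p] E by rewrite -EGp; split.
  by move=> [_ /(_ p erefl) [_ [_ [g Gg pg]]]]; exists g.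
have -> : coinc G p = E.
  apply/seteqP; split => [y [g' Gg' g'p]|y Ey]; last by exists g => //; rewrite pg.
  have : EG G [set p] [set y].
    split => [|q ->]; first exact: closed_set1R.
    by split => //; split; [exact: closed_set1R | exists g' => // z ->].
  by rewrite -EGp => -[_]; apply.
by split => //; exists g.
Qed.

Lemma KG_omits {G} :
  KG G = [set CL E | E in [set E : set R | closed E]] ->
  forall x, exists t, ~ hits G x t.
Proof.
move=> KGE x; apply: contrapT => allt.
have [F cF EGF] : KG G (CL set0) by rewrite KGE; exists set0 => //; exact: closed0.
have : EG G F [set x].
  split => [|q Fq]; first exact: closed_set1R.
  split; first exact: cF.
  split; first exact: closed_set1R.
  have /contrapT [g Gg gq] : ~ ~ hits G x (q x) by move=> nq; apply: allt; exists (q x).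
  by exists g => // z ->.
by rewrite -EGF => -[_ /(_ x erefl)].
Qed.

Definition inf_env G x : \bar R := ereal_inf [set (g x)%:E | g in G].

Definition sup_env G x : \bar R := ereal_sup [set (g x)%:E | g in G].

Lemma inf_env_le {G g} x : G g -> (inf_env G x <= (g x)%:E)%E.
Proof. by move=> Gg; apply: ereal_inf_lbound; exists g. Qed.

Lemma sup_env_ge {G g} x : G g -> ((g x)%:E <= sup_env G x)%E.
Proof. by move=> Gg; apply: ereal_sup_ubound; exists g. Qed.

Lemma inf_env_lt {G x a} : (inf_env G x < a)%E -> exists2 g, G g & ((g x)%:E < a)%E.
Proof. by move/ereal_inf_lt => [_ [g Gg <-] ga]; exists g. Qed.

Lemma sup_env_gt {G x a} : (a < sup_env G x)%E -> exists2 g, G g & (a < (g x)%:E)%E.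
Proof. by move/ereal_sup_gt => [_ [g Gg <-] ag]; exists g. Qed.

Section hits_inside.
Context {G : set (R -> R)}.
Hypotheses (HG : forall g, G g -> continuous g) (KPG : coinc_property G).

Lemma near_not_hits x t : ~ hits G x t -> \forall z \near x, ~ hits G z t.
Proof.
move=> nt; apply: open_nbhs_nbhs; split => //; apply: closed_openC.
exact: (KPG _ (@cst_continuous _ _ t)).1.
Qed.

(* Glue [g1] to [g2] just right of [x]; the member of [G] agreeing with the
   glued function crosses the level [t] arbitrarily close to [x]. *)
Lemma hits_between g1 g2 x t : G g1 -> G g2 -> g1 x < t < g2 x -> hits G x t.
Proof.
move=> G1 G2 /andP[g1t tg2]; apply: contrapT => nt.
have /nbhs_ballP [e e0 nearx] : \forall z \near x, ~ hits G z t /\ t < g2 z.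
  by apply: filterI; [exact: near_not_hits | exact: continuous_gt_near (HG _ G2 x) tg2].
have d0 : 0 < e / 2 by rewrite divr_gt0.
have [p [cp pg1 pg2]] := continuous_glue x (HG _ G1) (HG _ G2) d0.
have [_ [g Gg pg]] := KPG _ cp.
have gx : g x = g1 x.
  by rewrite -pg ?pg1 //; exists g1 => //; rewrite pg1.
have gxd : g (x + e / 2) = g2 (x + e / 2).
  by rewrite -pg ?pg2 //; exists g2 => //; rewrite pg2.
have [_ tg2d] : ~ hits G (x + e / 2) t /\ t < g2 (x + e / 2).
  by apply: nearx; rewrite /ball /= ltr_norml; apply/andP; split; lra.
have [c cI gc] : exists2 c, c \in `[x, x + e / 2] & g c = t.
  apply: IVT; [lra | exact: continuous_subspaceT (HG _ Gg) |].
  by rewrite gx gxd ge_min le_max (ltW g1t) (ltW tg2d) orbT.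
have [nct _] : ~ hits G c t /\ t < g2 c.
  move: cI; rewrite in_itv /= => /andP[xc cxd].
  by apply: nearx; rewrite /ball /= ltr_norml; apply/andP; split; lra.
by apply: nct; exists g.
Qed.

Lemma hits_env x t : (inf_env G x < t%:E < sup_env G x)%E -> hits G x t.
Proof.
move=> /andP[/inf_env_lt [g1 G1 g1t] /sup_env_gt [g2 G2 tg2]].
by apply: (@hits_between g1 g2) => //; rewrite -!lte_fin g1t tg2.
Qed.

Lemma sup_env_continuous : continuous (sup_env G).
Proof.
have [g0 G0] := coinc_property_inhabited KPG.
move=> x; apply: order_continuous_at => [a /sup_env_gt [g Gg ag]|b supb].
  near=> z; apply: lt_le_trans (sup_env_ge z Gg).
  by near: z; exact: continuous_gt_near (continuous_EFin (HG _ Gg) x) ag.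
have [s /andP[sups sb]] := EFin_between supb.
have nhs : ~ hits G x s.
  move=> [g Gg gx]; move: (sup_env_ge x Gg); rewrite gx.
  by move=> /(lt_le_trans sups); rewrite ltxx.
have g0s : ((g0 x)%:E < s%:E)%E := le_lt_trans (sup_env_ge x G0) sups.
near=> z; rewrite ltNge; apply/negP => bz.
have : hits G z s.
  apply: hits_env; apply/andP; split; last exact: lt_le_trans sb bz.
  apply: le_lt_trans (inf_env_le z G0) _.
  by near: z; exact: continuous_lt_near (continuous_EFin (HG _ G0) x) g0s.
by near: z; exact: near_not_hits.
Unshelve. all: by end_near.
Qed.

(* Tilting [p] by [|z - y|] pushes it strictly inside the envelopes on a
   punctured neighbourhood of [y]; closedness of the coincidence set then
   gives the point [y] itself. *)
Lemma hits_below_sup p y : continuous p ->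
  (forall z, (inf_env G z <= (p z)%:E)%E) -> ((p y)%:E < sup_env G y)%E ->
  hits G y (p y).
Proof.
move=> cp infp /sup_env_gt [g2 G2 pg2].
pose psi z := p z + `|z - y|.
have cpsi : continuous psi.
  by move=> z; exact: continuousD (cp z) (continuous_dist y z).
have psiy : psi y = p y by rewrite /psi subrr normr0 addr0.
suff : coinc G psi y by rewrite /coinc /= psiy.
apply: closed_dnbhs (KPG _ cpsi).1 _.
have : \forall z \near y, 0 < g2 z - psi z.
  apply: continuous_gt_near; first exact: continuousB (HG _ G2 y) (cpsi y).
  by rewrite psiy subr_gt0 -lte_fin.
move=> /nbhs_dnbhs; apply: filter_app; near=> z => psig2.
have zy : z != y by near: z; exact: nbhs_dnbhs_neq.
apply: hits_env; apply/andP; split.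
  by apply: le_lt_trans (infp z) _; rewrite lte_fin /psi ltrDl normr_gt0 subr_eq0.
by apply: lt_le_trans (sup_env_ge z G2); rewrite lte_fin -subr_gt0.
Unshelve. all: by end_near.
Qed.

End hits_inside.
End coincidence.

Section mirror.
Context {R : realType}.
Implicit Types (G : set (R -> R)) (g p : R -> R).

Lemma opp_funK g : \- (\- g) = g.
Proof. by apply/funext => x; exact: opprK. Qed.

(* Reflecting through 0 swaps the two envelopes, which turns the results on
   [sup_env] into their counterparts for [inf_env]. *)
Definition mirror G : set (R -> R) := [set g | G (\- g)].

Lemma mirror_values G x :
  [set (g x)%:E | g in mirror G] = -%E @` [set (g x)%:E | g in G].
Proof.
apply/seteqP; split => v.
  move=> [g Gg <-]; exists ((\- g) x)%:E; first by exists (\- g).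
  by rewrite /= opprK.
by move=> [_ [g Gg <-] <-]; exists (\- g); [rewrite /mirror /= opp_funK | rewrite /= EFinN].
Qed.

Lemma inf_env_mirror G x : inf_env (mirror G) x = (- sup_env G x)%E.
Proof. by rewrite /inf_env mirror_values ereal_infN. Qed.

Lemma sup_env_mirror G x : sup_env (mirror G) x = (- inf_env G x)%E.
Proof. by rewrite /sup_env mirror_values ereal_supN. Qed.

Lemma hits_mirror G x t : hits (mirror G) x t <-> hits G x (- t).
Proof.
split => [[g Gg <-]|[g Gg gt]]; first by exists (\- g).
by exists (\- g); [rewrite /mirror /= opp_funK | rewrite /= gt opprK].
Qed.

Lemma mirror_continuous {G} : (forall g, G g -> continuous g) ->
  forall g, mirror G g -> continuous g.
Proof. by move=> HG g /HG cg x; rewrite -[g]opp_funK; exact: continuousN (cg x). Qed.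

Lemma coinc_property_mirror {G} : coinc_property G -> coinc_property (mirror G).
Proof.
move=> KPG p cp.
have -> : coinc (mirror G) p = coinc G (\- p).
  by apply/seteqP; split => y; [move/hits_mirror | move=> hy; apply/hits_mirror].
have [cl [g Gg pg]] := KPG _ (fun x => continuousN (cp x)).
split => //; exists (\- g); first by rewrite /mirror /= opp_funK.
by move=> y /pg /= <-; rewrite opprK.
Qed.

End mirror.

Section envelopes.
Context {R : realType} {G : set (R -> R)}.
Hypotheses (HG : forall g, G g -> continuous g) (KPG : coinc_property G).

Lemma inf_env_continuous : continuous (inf_env G).
Proof.
have -> : inf_env G = fun x => (- sup_env (mirror G) x)%E.
  by apply/funext => x; rewrite sup_env_mirror oppeK.
move=> x; apply: continuous_comp; last exact: oppe_continuous.
exact: sup_env_continuous (mirror_continuous HG) (coinc_property_mirror KPG) x.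
Qed.

Lemma hits_above_inf (p : R -> R) (y : R) : continuous p ->
  (forall z, ((p z)%:E <= sup_env G z)%E) -> (inf_env G y < (p y)%:E)%E ->
  hits G y (p y).
Proof.
move=> cp psup infp.
have /hits_mirror : hits (mirror G) y ((\- p) y).
  apply: hits_below_sup.
  - exact: mirror_continuous.
  - exact: coinc_property_mirror.
  - by move=> x; exact: continuousN (cp x).
  - by move=> z; rewrite inf_env_mirror EFinN leeN2.
  - by rewrite sup_env_mirror EFinN lteN2.
by rewrite /= opprK.
Qed.

Lemma hits_inside_env (p : R -> R) (y : R) : continuous p ->
  (forall z, (inf_env G z <= (p z)%:E)%E) ->
  (forall z, ((p z)%:E <= sup_env G z)%E) -> hits G y (p y).
Proof.
move=> cp infp psup.
case: (ltP (p y)%:E (sup_env G y)) => [|supp]; first exact: hits_below_sup.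
case: (ltP (inf_env G y) (p y)%:E) => [|pinf]; first exact: hits_above_inf.
have [g0 G0] := coinc_property_inhabited KPG.
exists g0 => //; apply/EFin_inj/le_anti.
by rewrite (le_trans (sup_env_ge y G0)) //= (le_trans pinf) // inf_env_le.
Qed.

Lemma env_fin_num {x t : R} : ~ hits G x t ->
  inf_env G x \is a fin_num \/ sup_env G x \is a fin_num.
Proof.
have [g0 G0] := coinc_property_inhabited KPG.
move=> nt; apply: contrapT => /not_orP[ninf nsup]; apply: nt; apply: hits_env => //.
have infNy : (inf_env G x = -oo)%E.
  by move: (inf_env_le x G0) ninf; case: (inf_env G x).
have supy : (sup_env G x = +oo)%E.
  by move: (sup_env_ge x G0) nsup; case: (sup_env G x).
by rewrite infNy supy ltNyr ltry.
Qed.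

Lemma eq_fint_env : G = fint (inf_env G) (sup_env G).
Proof.
apply/seteqP; split => [g Gg|p [cp [infp psup]]].
  by split; [exact: HG | split => x; [exact: inf_env_le | exact: sup_env_ge]].
have [_ [g Gg pg]] := KPG _ cp.
suff -> : p = g by [].
by apply/funext => y; apply: pg; exact: hits_inside_env.
Qed.

End envelopes.

Theorem corollary3p4 (R : realType) (G : set (R -> R))
  (HG : forall g, G g -> continuous g) :
  KG G = [set CL E | E in [set E : set R | closed E]] <->
  exists f h : R -> \bar R,
    [/\ continuous f, continuous h, (forall x, (f x <= h x)%E),
        f @^-1` range EFin `|` h @^-1` range EFin = setT & G = fint f h].
Proof.
split => [KGE|[f [h [cf ch fh cover ->]]]].
- have KPG := KG_coinc_property KGE.
  have [g0 G0] := coinc_property_inhabited KPG.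
  exists (inf_env G), (sup_env G); split.
  + exact: inf_env_continuous.
  + exact: sup_env_continuous.
  + by move=> x; exact: le_trans (inf_env_le x G0) (sup_env_ge x G0).
  + apply/seteqP; split => // y _; have [t nt] := KG_omits KGE y.
    case: (env_fin_num HG KPG nt) => /fineK finy; [left | right].
      by exists (fine (inf_env G y)).
    by exists (fine (sup_env G y)).
  + exact: eq_fint_env.
- apply: KG_fint => // x.
  have : [set: R] x by [].
  by rewrite -cover => -[] [r _ <-]; [left | right].
Qed.
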